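(* Let $b>0$, $c$ be constants and $m\ge1$ an integer, and let $\phi(s)=\frac{\sqrt{b^2-s^2}}{b}+\sqrt{b^2-s^2}\int_0^s\frac{c\,(t^2)^{m-1/2}}{(b^2-t^2)^{3/2}}dt$. On $\mathbb{R}^2\setminus\{0\}$ let $$\alpha=e^{\sigma}\sqrt{(y^1)^2+(y^2)^2},\quad \beta=\frac{b\,e^{\sigma}(x^2y^1-x^1y^2)}{\sqrt{(x^1)^2+(x^2)^2}},\quad \sigma=(m-1)\ln[(x^1)^2+(x^2)^2].$$ Then $F=\alpha\phi(\beta/\alpha)$ is projectively flat and $\beta$ is not closed.
   Context: For a Riemannian metric $\alpha$ and a 1-form $\beta$, $\beta$ is closed if $d\beta=0$. The spray coefficients of a Finsler metric $F$ are $G^i=\frac14 g^{il}\{[F^2]_{x^ky^l}y^k-[F^2]_{x^l}\}$ with $g_{ij}=\frac12[F^2]_{y^iy^j}$. $F$ is projectively flat on an open $U\subset\mathbb{R}^n$ if $G^i=P(x,y)y^i$ in the standard coordinates of $U$ for some function $P$. *)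

From Stdlib Require Import Reals Lra ClassicalEpsilon.
Open Scope R_scope.

(* The derivative of a one-variable function at x (the unique l with
   derivable_pt_lim f x l); 0 if f is not differentiable at x. *)
Definition deriv1 (f : R -> R) (x : R) : R :=
  match excluded_middle_informative (exists l, derivable_pt_lim f x l) with
  | left H => proj1_sig (constructive_indefinite_description _ H)
  | right _ => 0
  end.

(* Oriented Riemann integral of f from a to b (0 if f not Riemann integrable). *)
Definition RInt (f : R -> R) (a b : R) : R :=
  match excluded_middle_informative
          (exists _ : Riemann_integrable f a b, True) with
  | left H => RiemannInt (proj1_sig (constructive_indefinite_description _ H))
  | right _ => 0
  end.

Definition R2 := (R * R)%type.

Definition coord (v : R2) (k : nat) : R :=
  match k with 1%nat => fst v | _ => snd v end.

Definition upd (v : R2) (k : nat) (t : R) : R2 :=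
  match k with 1%nat => (t, snd v) | _ => (fst v, t) end.

Definition Dx (k : nat) (E : R2 -> R2 -> R) : R2 -> R2 -> R :=
  fun x y => deriv1 (fun t => E (upd x k t) y) (coord x k).
Definition Dy (k : nat) (E : R2 -> R2 -> R) : R2 -> R2 -> R :=
  fun x y => deriv1 (fun t => E x (upd y k t)) (coord y k).

Definition Fsq (F : R2 -> R2 -> R) : R2 -> R2 -> R := fun x y => (F x y) ^ 2.

Definition gmet (F : R2 -> R2 -> R) (i j : nat) : R2 -> R2 -> R :=
  fun x y => / 2 * Dy i (Dy j (Fsq F)) x y.

Definition ginv (F : R2 -> R2 -> R) (i j : nat) (x y : R2) : R :=
  let g11 := gmet F 1 1 x y in
  let g12 := gmet F 1 2 x y in
  let g21 := gmet F 2 1 x y in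
  let g22 := gmet F 2 2 x y in
  let det := g11 * g22 - g12 * g21 in
  match i, j with
  | 1%nat, 1%nat => g22 / det
  | 1%nat, _ => - g12 / det
  | _, 1%nat => - g21 / det
  | _, _ => g11 / det
  end.

Definition sprayTerm (F : R2 -> R2 -> R) (l : nat) (x y : R2) : R :=
  Dy l (Dx 1 (Fsq F)) x y * fst y + Dy l (Dx 2 (Fsq F)) x y * snd y
  - Dx l (Fsq F) x y.

Definition spray (F : R2 -> R2 -> R) (i : nat) (x y : R2) : R :=
  / 4 * (ginv F i 1 x y * sprayTerm F 1 x y + ginv F i 2 x y * sprayTerm F 2 x y).

(* F is projectively flat on the set D ⊂ TU (of (x,y) where F is a
   Finsler metric): G^i = P(x,y) y^i for some function P. *)
Definition projectively_flat_on (F : R2 -> R2 -> R) (D : R2 -> R2 -> Prop) : Prop :=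
  exists P : R2 -> R2 -> R,
    forall x y, D x y ->
      spray F 1 x y = P x y * fst y /\ spray F 2 x y = P x y * snd y.

(* A 1-form w = w_1(x) dx^1 + w_2(x) dx^2, given as w(x, y) = w_i(x) y^i,
   is closed on U iff dw = 0, i.e. d(w_2)/dx^1 = d(w_1)/dx^2 on U. *)
Definition closed_1form (w : R2 -> R2 -> R) (U : R2 -> Prop) : Prop :=
  forall x, U x ->
    Dx 1 (fun x' _ => w x' (0, 1)) x (0, 0) = Dx 2 (fun x' _ => w x' (1, 0)) x (0, 0).

Definition punctured (x : R2) : Prop := x <> (0, 0).

Definition sigma (m : nat) (x : R2) : R :=
  (INR m - 1) * ln (fst x ^ 2 + snd x ^ 2).

Definition alpha (m : nat) (x y : R2) : R :=
  exp (sigma m x) * sqrt (fst y ^ 2 + snd y ^ 2).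

Definition beta (b : R) (m : nat) (x y : R2) : R :=
  b * exp (sigma m x) * (snd x * fst y - fst x * snd y)
    / sqrt (fst x ^ 2 + snd x ^ 2).

(* phi(s) = sqrt(b^2-s^2)/b + sqrt(b^2-s^2) * int_0^s c (t^2)^(m-1/2) / (b^2-t^2)^(3/2) dt,
   where (t^2)^(m-1/2) = |t|^(2m-1) for the integer m >= 1. *)
Definition phi (b c : R) (m : nat) (s : R) : R :=
  sqrt (b ^ 2 - s ^ 2) / b
  + sqrt (b ^ 2 - s ^ 2) *
      RInt (fun t => c * Rabs t ^ (2 * m - 1) / Rpower (b ^ 2 - t ^ 2) (3 / 2)) 0 s.

Definition Fmetric (b c : R) (m : nat) (x y : R2) : R :=
  alpha m x y * phi b c m (beta b m x y / alpha m x y).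

(* The region of TU where F is a (regular) Finsler metric:
   x <> 0, y <> 0 and |beta/alpha| < b. *)
Definition regular_dom (b : R) (m : nat) (x y : R2) : Prop :=
  punctured x /\ y <> (0, 0) /\ Rabs (beta b m x y / alpha m x y) < b.

(* Write u = x.y, w = x^y = x^2 y^1 - x^1 y^2 and e = exp sigma.  Lagrange's identity
   |x|^2 |y|^2 = u^2 + w^2 gives alpha sqrt(b^2 - (beta/alpha)^2) = e |u| / |x|, so on the open
   set u <> 0, which contains the regular domain of F,
        F^2 = E := e^2 u^2 / |x|^2 * Phi(s)^2,     s = beta/alpha = b w / (|x| |y|),
   with Phi(s) = 1 + b int_0^s dens.  The only facts used about Phi are Phi' = b dens and
   (s dens)' = dens (2m + 3 s^2 / (b^2 - s^2)).  For E one checks by direct computation Euler's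
   relation y.E_y = 2E and Hamel's equation [y.E_x]_{y^l} - 2 E_{x^l} = (y.E_x) E_{y^l} / (2E);
   differentiating Euler's relation gives g y = E_y / 2, and inverting g yields G^i = P y^i with
   P = (y.E_x) / (4E).  Since [deriv1] is 0 where a derivative does not exist, two degenerate
   situations are treated separately: if Phi(s) = 0 the Hessian of E has rank one, and for m = 1,
   c <> 0 the density has a kink at 0 which kills entries of g on the line beta = 0; in both cases
   det g = 0 and the spray vanishes.  Finally, at x = (1, 0) one has d(beta_2)/dx^1 = -2b(m-1),
   which differs from d(beta_1)/dx^2 = b, so beta is not closed. *)

From Pilot Require Import Defs.
From Stdlib Require Import Reals Lra Lia ClassicalEpsilon Classical.
From Coquelicot Require Import Coquelicot.
Open Scope R_scope.

Lemma deriv1_is f x l : is_derive f x l -> deriv1 f x = l.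
Proof.
  intros H. apply is_derive_Reals in H. unfold deriv1.
  destruct excluded_middle_informative as [e|n].
  - destruct constructive_indefinite_description as [l' Hl']. simpl.
    eapply uniqueness_limite; eauto.
  - exfalso; apply n; eauto.
Qed.

Lemma deriv1_nex f x : ~ ex_derive f x -> deriv1 f x = 0.
Proof.
  intros H. unfold deriv1. destruct excluded_middle_informative as [[l Hl]|n]; auto.
  exfalso; apply H. exists l. apply is_derive_Reals; auto.
Qed.

Lemma deriv1_loc f g x : locally x (fun t => f t = g t) -> deriv1 f x = deriv1 g x.
Proof.
  intros H. destruct (classic (ex_derive g x)) as [[l Hg]|Hg].
  - rewrite (deriv1_is g x l Hg). apply deriv1_is.
    apply (is_derive_ext_loc g f); [|exact Hg].
    eapply filter_imp; [|exact H]. intros t Ht; auto.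
  - rewrite (deriv1_nex g) by auto. apply deriv1_nex. intros [l Hl]. apply Hg.
    exists l. apply (is_derive_ext_loc f g); auto.
Qed.

Lemma is_derive_global_min f t0 d : is_derive f t0 d -> (forall t, f t0 <= f t) -> d = 0.
Proof.
  intros Hd Hmin. apply is_derive_Reals in Hd.
  pose (pr := exist _ d Hd : derivable_pt f t0).
  rewrite <- (derive_pt_eq_0 f t0 d pr Hd).
  apply (deriv_minimum f (t0 - 1) (t0 + 1)); [lra | lra | intros t _ _; apply Hmin].
Qed.

(* |sg| is not differentiable at a simple zero of sg: both |sg| - sg and
   |sg| + sg would have a minimum there, forcing sg'(t0) = 0. *)
Lemma Rabs_not_derivable sg t0 ds :
  is_derive sg t0 ds -> sg t0 = 0 -> ds <> 0 -> ~ ex_derive (fun t => Rabs (sg t)) t0.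
Proof.
  intros Hs H0 Hds [d Hd].
  assert (Hminus : d - ds = 0).
  { apply (is_derive_global_min (fun t => Rabs (sg t) - sg t) t0).
    - apply (is_derive_minus _ _ _ d ds); auto.
    - intros t. rewrite H0, Rabs_R0. pose proof (Rle_abs (sg t)). lra. }
  assert (Hplus : d + ds = 0).
  { apply (is_derive_global_min (fun t => Rabs (sg t) + sg t) t0).
    - apply (is_derive_plus _ _ _ d ds); auto.
    - intros t. rewrite H0, Rabs_R0. pose proof (Rle_abs (- sg t)).
      rewrite Rabs_Ropp in *. lra. }
  lra.
Qed.

Lemma locally_nonzero (f : R -> R) x :
  continuous f x -> f x <> 0 -> locally x (fun t => f t <> 0).
Proof.
  intros Hc H0.
  assert (Hpos : 0 < Rabs (f x)) by (apply Rabs_pos_lt; auto).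
  apply (Hc (fun y => y <> 0)). exists (mkposreal _ Hpos).
  intros y Hy ->. change (Rabs (0 - f x) < Rabs (f x)) in Hy.
  rewrite Rminus_0_l, Rabs_Ropp in Hy. lra.
Qed.

Lemma kink_not_derivable a B sg t0 da dB ds :
  is_derive a t0 da -> is_derive B t0 dB -> is_derive sg t0 ds ->
  sg t0 = 0 -> ds <> 0 -> B t0 <> 0 ->
  ~ ex_derive (fun t => a t + B t * Rabs (sg t)) t0.
Proof.
  intros Ha HB Hs H0 Hds HB0 [d Hd].
  apply (Rabs_not_derivable sg t0 ds Hs H0 Hds).
  assert (Hk : is_derive (fun t => B t * Rabs (sg t)) t0 (d - da)).
  { apply (is_derive_ext (fun t => (a t + B t * Rabs (sg t)) - a t)).
    - intros t; simpl; ring.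
    - apply (is_derive_minus _ _ _ d da); auto. }
  eexists. apply (is_derive_ext_loc (fun t => B t * Rabs (sg t) / B t)).
  - assert (Hc : continuous B t0) by (apply ex_derive_continuous; eexists; eauto).
    eapply filter_imp; [|exact (locally_nonzero B t0 Hc HB0)].
    intros t Ht. simpl. field. auto.
  - exact (is_derive_div _ _ _ _ _ Hk HB HB0).
Qed.

Definition dot (x y : R2) : R := fst x * fst y + snd x * snd y.
Definition sqn (v : R2) : R := fst v * fst v + snd v * snd v.
Definition wedge (x y : R2) : R := snd x * fst y - fst x * snd y.

Lemma lagrange_identity x y : sqn x * sqn y = dot x y ^ 2 + wedge x y ^ 2.
Proof. destruct x, y; unfold sqn, dot, wedge; simpl; ring. Qed.

Lemma sqn_pos_l x y : dot x y <> 0 -> 0 < sqn x.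
Proof.
  destruct x as [x1 x2], y as [y1 y2]; unfold dot, sqn; simpl; intros H.
  destruct (Req_dec x1 0); destruct (Req_dec x2 0); subst; nra.
Qed.

Lemma sqn_pos_r x y : dot x y <> 0 -> 0 < sqn y.
Proof.
  destruct x as [x1 x2], y as [y1 y2]; unfold dot, sqn; simpl; intros H.
  destruct (Req_dec y1 0); destruct (Req_dec y2 0); subst; nra.
Qed.

(* Two functions on TU agree on the open set {x.y <> 0}, which contains the
   regular domain of F. *)
Definition agree (G H : R2 -> R2 -> R) : Prop :=
  forall x y, dot x y <> 0 -> G x y = H x y.

Lemma dot_upd_l x y k t : dot (upd x k t) y = coord y k * t + dot (upd x k 0) y.
Proof. destruct x, y, k as [|[|k]]; unfold dot; simpl; ring. Qed.
Lemma dot_upd_r x y k t : dot x (upd y k t) = coord x k * t + dot x (upd y k 0).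
Proof. destruct x, y, k as [|[|k]]; unfold dot; simpl; ring. Qed.

Lemma upd_coord v k : upd v k (coord v k) = v.
Proof. destruct v, k as [|[|k]]; reflexivity. Qed.

Lemma locally_affine_nonzero a c0 t0 :
  a * t0 + c0 <> 0 -> locally t0 (fun t => a * t + c0 <> 0).
Proof.
  intros H. apply locally_nonzero; [|exact H].
  apply (ex_derive_continuous (fun t => a * t + c0)). auto_derive. auto.
Qed.

(* Partial derivatives only see the germ, so they preserve agreement on {x.y <> 0}. *)
Lemma agree_Dx k G H : agree G H -> agree (Defs.Dx k G) (Defs.Dx k H).
Proof.
  intros HGH x y Hxy. apply deriv1_loc.
  pose proof (dot_upd_l x y k (coord x k)) as Ex. rewrite upd_coord in Ex.
  rewrite Ex in Hxy.
  eapply filter_imp; [|exact (locally_affine_nonzero _ _ _ Hxy)].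
  intros t Ht. apply HGH. rewrite dot_upd_l. exact Ht.
Qed.

Lemma agree_Dy k G H : agree G H -> agree (Dy k G) (Dy k H).
Proof.
  intros HGH x y Hxy. apply deriv1_loc.
  pose proof (dot_upd_r x y k (coord y k)) as Ey. rewrite upd_coord in Ey.
  rewrite Ey in Hxy.
  eapply filter_imp; [|exact (locally_affine_nonzero _ _ _ Hxy)].
  intros t Ht. apply HGH. rewrite dot_upd_r. exact Ht.
Qed.

Lemma agree_Dx_deriv k G H H' : agree G H ->
  (forall x y, dot x y <> 0 -> is_derive (fun t => H (upd x k t) y) (coord x k) (H' x y)) ->
  agree (Defs.Dx k G) H'.
Proof.
  intros HGH Hd x y Hxy. rewrite (agree_Dx k G H HGH x y Hxy). apply deriv1_is, Hd, Hxy.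
Qed.

Lemma agree_Dy_deriv k G H H' : agree G H ->
  (forall x y, dot x y <> 0 -> is_derive (fun t => H x (upd y k t)) (coord y k) (H' x y)) ->
  agree (Dy k G) H'.
Proof.
  intros HGH Hd x y Hxy. rewrite (agree_Dy k G H HGH x y Hxy). apply deriv1_is, Hd, Hxy.
Qed.

Lemma is_derive_eq (f : R -> R) x d d' : is_derive f x d -> d = d' -> is_derive f x d'.
Proof. intros H <-. exact H. Qed.

Lemma Dy_weighted_sum l (H : nat -> R2 -> R2 -> R) x y : (l = 1 \/ l = 2)%nat ->
  ex_derive (fun t => H 1%nat x (upd y l t)) (coord y l) ->
  ex_derive (fun t => H 2%nat x (upd y l t)) (coord y l) ->
  Dy l (fun x y => fst y * H 1%nat x y + snd y * H 2%nat x y) x y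
  = fst y * Dy l (H 1%nat) x y + snd y * Dy l (H 2%nat) x y + H l x y.
Proof.
  intros Hl [d1 H1] [d2 H2].
  assert (E1 : Dy l (H 1%nat) x y = d1) by (apply deriv1_is, H1).
  assert (E2 : Dy l (H 2%nat) x y = d2) by (apply deriv1_is, H2).
  rewrite E1, E2. apply deriv1_is. destruct x as [x1 x2], y as [y1 y2].
  destruct Hl as [-> | ->]; cbn [upd coord fst snd] in *.
  - pose proof (is_derive_plus _ _ _ _ _
      (is_derive_mult (fun t => t) _ y1 1 d1 (is_derive_id y1) H1 Rmult_comm)
      (is_derive_scal _ y1 y2 d2 H2)) as Hd.
    apply (is_derive_eq _ _ _ _ Hd). unfold plus, mult; simpl. ring.
  - pose proof (is_derive_plus _ _ _ _ _ (is_derive_scal _ y2 y1 d1 H1)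
      (is_derive_mult (fun t => t) _ y2 1 d2 (is_derive_id y2) H2 Rmult_comm)) as Hd.
    apply (is_derive_eq _ _ _ _ Hd). unfold plus, mult; simpl. ring.
Qed.

Lemma is_derive_0_of_dominated f g :
  f 0 = 0 -> continuous g 0 -> g 0 = 0 ->
  (forall t, Rabs (f t) <= Rabs t * Rabs (g t)) -> is_derive f 0 0.
Proof.
  intros Hf0 Hg Hg0 Hfg. apply is_derive_Reals. intros eps Heps.
  destruct (proj1 (filterlim_locally (F := locally 0) g (g 0)) Hg (mkposreal eps Heps)) as [d Hd].
  exists d. intros h Hh Hhd.
  assert (Hgh : Rabs (g h) < eps).
  { specialize (Hd h). rewrite Hg0 in Hd.
    assert (Hb : ball 0 d h) by (change (Rabs (h - 0) < d); rewrite Rminus_0_r; exact Hhd).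
    specialize (Hd Hb). change (Rabs (g h - 0) < eps) in Hd. rewrite Rminus_0_r in Hd. exact Hd. }
  rewrite Rplus_0_l, Hf0, Rminus_0_r, Rminus_0_r.
  unfold Rdiv. rewrite Rabs_mult, Rabs_inv.
  assert (0 < Rabs h) by (apply Rabs_pos_lt; exact Hh).
  apply (Rmult_lt_reg_r (Rabs h)); [assumption|].
  rewrite Rmult_assoc, Rinv_l, Rmult_1_r by lra.
  specialize (Hfg h). nra.
Qed.

Lemma is_derive_Rabs_sign z : z <> 0 -> is_derive Rabs z (sign z).
Proof.
  intros Hz. apply (is_derive_ext (fun t => Rabs (id t))); [reflexivity|].
  rewrite <- (Rmult_1_r (sign z)). apply is_derive_Rabs; [apply (is_derive_id z) | exact Hz].
Qed.

Lemma Rabs_pow_continuous n z : continuous (fun t => Rabs t ^ n) z.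
Proof.
  apply (continuous_comp Rabs (fun u => u ^ n) z (continuous_Rabs z)).
  apply (ex_derive_continuous (fun u => u ^ n)). auto_derive. auto.
Qed.

Lemma Rabs_pow_derivable n z : z <> 0 \/ (2 <= n)%nat -> ex_derive (fun t => Rabs t ^ n) z.
Proof.
  intros Hzn. destruct (Req_dec z 0) as [-> | Hz].
  - assert (Hn : (2 <= n)%nat) by (destruct Hzn as [H | H]; [contradiction | exact H]).
    exists 0. apply (is_derive_0_of_dominated _ (fun t => Rabs t ^ (n - 1))).
    + rewrite Rabs_R0. apply pow_i. lia.
    + apply Rabs_pow_continuous.
    + rewrite Rabs_R0. apply pow_i. lia.
    + intros t. rewrite <- RPow_abs, Rabs_Rabsolu, <- RPow_abs, Rabs_Rabsolu.
      replace n with (S (n - 1)) at 1 by lia. simpl. lra.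
  - eexists. apply (is_derive_pow Rabs), is_derive_Rabs_sign, Hz.
Qed.

Lemma t_Rabs_pow_deriv n z : (1 <= n)%nat ->
  is_derive (fun t => t * Rabs t ^ n) z (INR (S n) * Rabs z ^ n).
Proof.
  intros Hn. destruct (Req_dec z 0) as [-> | Hz].
  - rewrite Rabs_R0, pow_i, Rmult_0_r by lia.
    apply (is_derive_0_of_dominated _ (fun t => Rabs t ^ n)).
    + ring.
    + apply Rabs_pow_continuous.
    + rewrite Rabs_R0. apply pow_i. lia.
    + intros t. rewrite Rabs_mult, (Rabs_right (Rabs t ^ n)); [lra|].
      apply Rle_ge, pow_le, Rabs_pos.
  - assert (Hsz : z * sign z = Rabs z).
    { destruct (Rlt_dec 0 z).
      - rewrite sign_eq_1, Rabs_right; lra.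
      - rewrite sign_eq_m1, Rabs_left; lra. }
    pose proof (is_derive_pow Rabs n z (sign z) (is_derive_Rabs_sign z Hz)) as Hp.
    pose proof (is_derive_mult (fun t => t) (fun t => Rabs t ^ n) z 1 _ (is_derive_id z) Hp Rmult_comm) as Hm.
    replace (INR (S n) * Rabs z ^ n) with (1 * Rabs z ^ n + z * (INR n * sign z * Rabs z ^ pred n));
      [exact Hm|].
    destruct n as [|k]; [lia|]. cbn [pred]. rewrite !S_INR.
    change (Rabs z ^ S k) with (Rabs z * Rabs z ^ k). rewrite <- Hsz. ring.
Qed.

Definition weight (b t : R) : R := / Rpower (b ^ 2 - t ^ 2) (3 / 2).
Definition dens (b c : R) (m : nat) (t : R) : R :=
  c * Rabs t ^ (2 * m - 1) / Rpower (b ^ 2 - t ^ 2) (3 / 2).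
(* phi(s) = sqrt(b^2 - s^2) / b * Phi(s); Phi is the factor that matters. *)
Definition Phi (b c : R) (m : nat) (s : R) : R := 1 + b * Defs.RInt (dens b c m) 0 s.

Lemma dens_weight b c m t : dens b c m t = c * Rabs t ^ (2 * m - 1) * weight b t.
Proof. reflexivity. Qed.

Lemma weight_pos b t : 0 < weight b t.
Proof. apply Rinv_0_lt_compat, exp_pos. Qed.

Lemma weight_deriv b z : -b < z < b -> is_derive (weight b) z (3 * z / (b ^ 2 - z ^ 2) * weight b z).
Proof.
  intros Hz. assert (Hp : 0 < b ^ 2 - z ^ 2) by nra. unfold weight, Rpower.
  auto_derive.
  - repeat split; [nra | apply Rgt_not_eq, exp_pos].
  - replace (b * (b * 1) + - (z * (z * 1))) with (b ^ 2 - z ^ 2) by ring.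
    field. split; [apply Rgt_not_eq, exp_pos | nra].
Qed.

Lemma dens_continuous b c m z : -b < z < b -> continuous (dens b c m) z.
Proof.
  intros Hz. apply (continuous_ext (fun t => c * Rabs t ^ (2 * m - 1) * weight b t));
    [intros t; reflexivity|].
  apply (continuous_mult (fun t => c * Rabs t ^ (2 * m - 1)) (weight b)).
  - apply (continuous_mult (fun _ => c) (fun t => Rabs t ^ (2 * m - 1)));
      [apply continuous_const | apply Rabs_pow_continuous].
  - apply (ex_derive_continuous (weight b)). eexists. apply weight_deriv, Hz.
Qed.

Lemma dens_ex_RInt b c m z : -b < z < b -> ex_RInt (dens b c m) 0 z.
Proof.
  intros Hz. apply (ex_RInt_continuous (V := R_CompleteNormedModule)). intros t Ht.
  apply dens_continuous. revert Ht. apply Rmin_case_strong; apply Rmax_case_strong; intros; lra.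
Qed.

Lemma RInt_dens b c m z : -b < z < b ->
  Defs.RInt (dens b c m) 0 z = RInt (dens b c m) 0 z.
Proof.
  intros Hz. unfold Defs.RInt. destruct excluded_middle_informative as [e|n].
  - symmetry. apply RInt_Reals.
  - exfalso. apply n. exists (ex_RInt_Reals_0 _ _ _ (dens_ex_RInt b c m z Hz)). auto.
Qed.

Lemma Phi_deriv b c m z : 0 < b -> -b < z < b -> is_derive (Phi b c m) z (b * dens b c m z).
Proof.
  intros hb Hz.
  set (e := Rmin (z + b) (b - z)).
  assert (He : 0 < e) by (unfold e; apply Rmin_case; lra).
  assert (Hnear : locally z (fun t => -b < t < b)).
  { exists (mkposreal e He). intros t Ht. change (Rabs (t - z) < e) in Ht. apply Rabs_def2 in Ht.
    pose proof (Rmin_l (z + b) (b - z)) as H1. pose proof (Rmin_r (z + b) (b - z)) as H2.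
    fold e in H1, H2. lra. }
  apply (is_derive_ext_loc (fun s => 1 + b * RInt (dens b c m) 0 s)).
  - eapply filter_imp; [|exact Hnear]. intros t Ht. unfold Phi. rewrite RInt_dens; auto.
  - rewrite <- (plus_zero_l (b * dens b c m z)).
    apply (is_derive_plus (fun _ => 1) (fun s => b * RInt (dens b c m) 0 s));
      [exact (is_derive_const (K := R_AbsRing) (1 : R) z) | apply is_derive_scal].
    apply (is_derive_RInt (dens b c m) _ 0 z).
    + eapply filter_imp; [|exact Hnear]. intros t Ht.
      apply (RInt_correct (V := R_CompleteNormedModule)), dens_ex_RInt, Ht.
    + apply dens_continuous, Hz.
Qed.

Lemma Phi_0 b c m : 0 < b -> Phi b c m 0 = 1.
Proof.
  intros hb. unfold Phi. rewrite RInt_dens, RInt_point by lra. unfold zero; simpl. ring.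
Qed.

(* s dens(s) is differentiable even where dens is not:
   (s dens(s))' = dens(s) (2m + 3 s^2 / (b^2 - s^2)). *)
Lemma s_dens_deriv b c m z : (1 <= m)%nat -> -b < z < b ->
  is_derive (fun s => s * dens b c m s) z
    (dens b c m z * (2 * INR m + 3 * z ^ 2 / (b ^ 2 - z ^ 2))).
Proof.
  intros hm Hz. assert (Hp : 0 < b ^ 2 - z ^ 2) by nra.
  apply (is_derive_ext (fun s => c * (s * Rabs s ^ (2 * m - 1)) * weight b s)).
  { intros t. rewrite dens_weight. change (@eq R (c * (t * Rabs t ^ (2 * m - 1)) * weight b t)
      (t * (c * Rabs t ^ (2 * m - 1) * weight b t))). ring. }
  pose proof (is_derive_scal _ z c _ (t_Rabs_pow_deriv (2 * m - 1) z ltac:(lia))) as H1.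
  pose proof (is_derive_mult _ _ z _ _ H1 (weight_deriv b z Hz) Rmult_comm) as H.
  match type of H with is_derive _ _ ?d => replace (dens b c m z * _) with d; [exact H|] end.
  rewrite dens_weight. replace (S (2 * m - 1)) with (2 * m)%nat by lia. rewrite mult_INR.
  unfold plus, mult; simpl. field. lra.
Qed.

Lemma dens_derivable b c m z : (1 <= m)%nat -> -b < z < b ->
  (2 <= m)%nat \/ c = 0 \/ z <> 0 -> ex_derive (dens b c m) z.
Proof.
  intros hm Hz H. destruct (Req_dec c 0) as [-> | Hc].
  - exists 0. apply (is_derive_ext (fun _ => 0)).
    + intros t. rewrite dens_weight. change (@eq R 0 (0 * Rabs t ^ (2 * m - 1) * weight b t)). ring.
    + apply (is_derive_const (K := R_AbsRing) (0 : R) z).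
  - apply (ex_derive_ext (fun t => c * Rabs t ^ (2 * m - 1) * weight b t)); [intros t; reflexivity|].
    apply ex_derive_mult; [apply ex_derive_scal, Rabs_pow_derivable | eexists; apply weight_deriv, Hz].
    destruct H as [H | [H | H]]; [right; lia | contradiction | left; exact H].
Qed.

(* For m = 1, dens(z) = c |z| w(z): a kink at 0 unless c = 0. *)
Lemma dens_kink b c z : dens b c 1 z = c * Rabs z * weight b z.
Proof. rewrite dens_weight. simpl. ring. Qed.

(* The model E = e^(2 sigma) (x.y)^2 / |x|^2 * Ph(s)^2, s = b (x^y) / (|x| |y|), for an
   abstract profile Ph with Ph' = b jf and (s jf(s))' = jf(s) (2 mm + 3 s^2 / (b^2 - s^2)). *)
Section Model.
Variables (Ph jf hh : R -> R) (b mm : R).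
Hypothesis hb : 0 < b.
Hypothesis Ph_deriv : forall z, -b < z < b -> is_derive Ph z (b * jf z).
Hypothesis hh_deriv : forall z, -b < z < b -> is_derive hh z (jf z * (2 * mm + 3 * z ^ 2 / (b ^ 2 - z ^ 2))).
(* hh(s) = s jf(s) is differentiable even where jf is not. *)
Hypothesis hh_def : forall z, hh z = z * jf z.

Definition conf (x : R2) : R := exp ((mm - 1) * ln (sqn x)).
Definition sarg (x y : R2) : R := b * wedge x y / (sqrt (sqn x) * sqrt (sqn y)).
Definition Amod (x y : R2) : R := conf x ^ 2 * dot x y ^ 2 / sqn x.
Definition Emod (x y : R2) : R := Amod x y * Ph (sarg x y) ^ 2.

Definition wedge_x (k : nat) (y : R2) : R := match k with 1%nat => - snd y | _ => fst y end.
Definition wedge_y (k : nat) (x : R2) : R := match k with 1%nat => snd x | _ => - fst x end.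
Definition sarg_x (k : nat) (x y : R2) : R :=
  b * wedge_x k y / (sqrt (sqn x) * sqrt (sqn y))
  - b * wedge x y * coord x k / (sqrt (sqn x) ^ 3 * sqrt (sqn y)).
Definition sarg_y (k : nat) (x y : R2) : R :=
  b * wedge_y k x / (sqrt (sqn x) * sqrt (sqn y))
  - b * wedge x y * coord y k / (sqrt (sqn x) * sqrt (sqn y) ^ 3).
Definition Amod_x (k : nat) (x y : R2) : R :=
  conf x ^ 2 / sqn x * (2 * dot x y * coord y k + dot x y ^ 2 * (4 * mm - 6) * coord x k / sqn x).
Definition Amod_y (k : nat) (x y : R2) : R :=
  conf x ^ 2 / sqn x * (2 * dot x y * coord x k).
Definition Emod_x (k : nat) (x y : R2) : R :=
  Ph (sarg x y) * (Amod_x k x y * Ph (sarg x y) + 2 * Amod x y * b * jf (sarg x y) * sarg_x k x y).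
Definition Emod_y (k : nat) (x y : R2) : R :=
  Ph (sarg x y) * (Amod_y k x y * Ph (sarg x y) + 2 * Amod x y * b * jf (sarg x y) * sarg_y k x y).
Definition DEmod (x y : R2) : R :=
  Ph (sarg x y) * (conf x ^ 2 / sqn x * (2 * dot x y * sqn y + (4 * mm - 6) * dot x y ^ 3 / sqn x)
                   * Ph (sarg x y)
                   - 2 * Amod x y * b * dot x y / sqn x * hh (sarg x y)).

(* By Lagrange's identity, |s| < b on {x.y <> 0}. *)
Lemma sarg_bound x y : dot x y <> 0 -> -b < sarg x y < b.
Proof.
  intros Hu. pose proof (sqn_pos_l _ _ Hu). pose proof (sqn_pos_r _ _ Hu).
  unfold sarg.
  set (rx := sqrt (sqn x)). set (ry := sqrt (sqn y)).
  assert (HR : rx * rx = sqn x) by (apply sqrt_sqrt; lra).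
  assert (HY : ry * ry = sqn y) by (apply sqrt_sqrt; lra).
  assert (0 < rx) by (apply sqrt_lt_R0; lra).
  assert (0 < ry) by (apply sqrt_lt_R0; lra).
  assert (Hw : wedge x y ^ 2 < (rx * ry) ^ 2).
  { replace ((rx * ry) ^ 2) with ((rx * rx) * (ry * ry)) by ring.
    rewrite HR, HY, lagrange_identity.
    assert (0 < dot x y ^ 2) by (apply pow2_gt_0; auto). lra. }
  assert (0 < rx * ry) by nra.
  assert (-(rx * ry) < wedge x y < rx * ry) by (split; nra).
  split; apply (Rmult_lt_reg_r (rx * ry)); auto; unfold Rdiv;
    rewrite Rmult_assoc, Rinv_l by lra; nra.
Qed.

(* The derivatives of Ph and hh, in the form produced by [auto_derive]. *)
Lemma Derive_Ph z : -b < z < b -> Derive (fun t => Ph t) z = b * jf z.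
Proof. intros H. apply is_derive_unique, Ph_deriv, H. Qed.
Lemma Derive_hh z : -b < z < b ->
  Derive (fun t => hh t) z = jf z * (2 * mm + 3 * z ^ 2 / (b ^ 2 - z ^ 2)).
Proof. intros H. apply is_derive_unique, hh_deriv, H. Qed.

(* The denominator b^2 - s^2 produced by hh' is b^2 (x.y)^2 / (|x| |y|)^2, by Lagrange's
   identity, hence nonzero; stated in the form met inside [field]. *)
Lemma lagrange_denominator_nonzero x1 x2 y1 y2 rx ry :
  rx ^ 2 = x1 * x1 + x2 * x2 -> ry ^ 2 = y1 * y1 + y2 * y2 -> x1 * y1 + x2 * y2 <> 0 ->
  (b * (rx * ry)) ^ 2 - (b * (x2 * y1 + - (x1 * y2))) ^ 2 <> 0.
Proof.
  intros HR HY Hu.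
  replace ((b * (rx * ry)) ^ 2 - (b * (x2 * y1 + - (x1 * y2))) ^ 2)
    with (b ^ 2 * (x1 * y1 + x2 * y2) ^ 2) by (rewrite <- Rpow_mult_distr; ring [HR HY]).
  apply Rmult_integral_contrapositive_currified; apply pow_nonzero; lra.
Qed.

Ltac model_unfold :=
  unfold Emod, Emod_x, Emod_y, DEmod, Amod, Amod_x, Amod_y, sarg, sarg_x, sarg_y,
    conf, sqn, wedge, wedge_x, wedge_y, dot in *; cbn [upd coord fst snd] in *.

(* Hypotheses are only used when they match syntactically, since failed conversions
   between real expressions are very costly. *)
Ltac hyp := match goal with H : ?G |- ?G => exact H end.
Ltac model_side :=
  rewrite ?Rmult_1_r; unfold Rminus, Rdiv in *; repeat split;
  try hyp;
  try (match goal with |- ex_derive (fun t => Ph t) _ => eexists; apply Ph_deriv; hyp end);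
  try (match goal with |- ex_derive (fun t => hh t) _ => eexists; apply hh_deriv; hyp end);
  try (match goal with |- ?X <> 0 => match goal with H : 0 < X |- _ => exact (Rgt_not_eq _ _ H) end end);
  try (repeat apply Rmult_integral_contrapositive_currified;
       apply Rgt_not_eq, sqrt_lt_R0; hyp).

Ltac model_field :=
  rewrite ?Rmult_1_r; unfold Rminus, Rdiv in *;
  rewrite ?Derive_Ph, ?Derive_hh by assumption; rewrite ?hh_def;
  match goal with Hq : 0 < ?qx, Hy : 0 < ?qy |- _ =>
    let rx := fresh "rx" in let ry := fresh "ry" in
    let HR := fresh "HR" in let HY := fresh "HY" in
    lazymatch qx with _ * _ + _ * _ => idtac end;
    lazymatch qy with _ * _ + _ * _ => idtac end;
    set (rx := sqrt qx) in *; set (ry := sqrt qy) in *;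
    assert (HR : rx ^ 2 = qx) by (unfold rx; rewrite <- Rsqr_pow2, Rsqr_sqrt; lra);
    assert (HY : ry ^ 2 = qy) by (unfold ry; rewrite <- Rsqr_pow2, Rsqr_sqrt; lra);
    assert (rx <> 0) by (unfold rx; apply Rgt_not_eq, sqrt_lt_R0; auto);
    assert (ry <> 0) by (unfold ry; apply Rgt_not_eq, sqrt_lt_R0; auto);
    try (set (e := exp _) in *);
    field [HR HY]; repeat split; auto; try lra;
    eapply lagrange_denominator_nonzero; eassumption
  end.

Ltac model_prep x y Hu :=
  pose proof (sqn_pos_l _ _ Hu); pose proof (sqn_pos_r _ _ Hu); pose proof (sarg_bound _ _ Hu) as Hs;
  destruct x as [x1 x2], y as [y1 y2]; model_unfold.

Lemma Emod_dx k x y : (k = 1 \/ k = 2)%nat -> dot x y <> 0 ->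
  is_derive (fun t => Emod (upd x k t) y) (coord x k) (Emod_x k x y).
Proof.
  intros Hk Hu. destruct Hk as [-> | ->]; model_prep x y Hu;
    auto_derive; [model_side | model_field | model_side | model_field].
Qed.

Lemma Emod_dy k x y : (k = 1 \/ k = 2)%nat -> dot x y <> 0 ->
  is_derive (fun t => Emod x (upd y k t)) (coord y k) (Emod_y k x y).
Proof.
  intros Hk Hu. destruct Hk as [-> | ->]; model_prep x y Hu;
    auto_derive; [model_side | model_field | model_side | model_field].
Qed.

Lemma Emod_euler x y : dot x y <> 0 ->
  fst y * Emod_y 1 x y + snd y * Emod_y 2 x y = 2 * Emod x y.
Proof. intros Hu. model_prep x y Hu. model_field. Qed.

Lemma Emod_transport x y : dot x y <> 0 ->
  fst y * Emod_x 1 x y + snd y * Emod_x 2 x y = DEmod x y.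
Proof. intros Hu. model_prep x y Hu. model_field. Qed.

(* Hamel's equation for E: [y^k E_{x^k}]_{y^l} - 2 E_{x^l} = (y^k E_{x^k}) E_{y^l} / (2E).
   This is where the two differential equations satisfied by Ph and hh enter. *)
Lemma Emod_hamel l x y : (l = 1 \/ l = 2)%nat -> dot x y <> 0 -> exists d,
  is_derive (fun t => DEmod x (upd y l t)) (coord y l) d /\
  2 * Emod x y * (d - 2 * Emod_x l x y) = DEmod x y * Emod_y l x y.
Proof.
  intros Hl Hu. destruct Hl as [-> | ->]; model_prep x y Hu;
    (eexists; split; [auto_derive; [model_side | reflexivity] | model_field]).
Qed.

Lemma Emod_partials_smooth k l x y : (k = 1 \/ k = 2)%nat -> (l = 1 \/ l = 2)%nat ->
  dot x y <> 0 -> ex_derive jf (sarg x y) ->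
  ex_derive (fun t => Emod_x k x (upd y l t)) (coord y l) /\
  ex_derive (fun t => Emod_y k x (upd y l t)) (coord y l).
Proof.
  intros Hk Hl Hu Hj.
  destruct Hk as [-> | ->], Hl as [-> | ->]; model_prep x y Hu;
    split; auto_derive; model_side.
Qed.

Lemma Emod_hessian_rank_one j l x y : (j = 1 \/ j = 2)%nat -> (l = 1 \/ l = 2)%nat ->
  dot x y <> 0 -> ex_derive jf (sarg x y) -> Ph (sarg x y) = 0 ->
  is_derive (fun t => Emod_y j x (upd y l t)) (coord y l)
    (2 * Amod x y * b ^ 2 * jf (sarg x y) ^ 2 * sarg_y l x y * sarg_y j x y).
Proof.
  intros Hj Hl Hu Hjf H0.
  destruct Hj as [-> | ->], Hl as [-> | ->]; model_prep x y Hu;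
    auto_derive; model_side; unfold Rminus, Rdiv in *; rewrite H0; model_field.
Qed.

Lemma sarg_dy l x y : (l = 1 \/ l = 2)%nat -> dot x y <> 0 ->
  is_derive (fun t => sarg x (upd y l t)) (coord y l) (sarg_y l x y).
Proof.
  intros Hl Hu. destruct Hl as [-> | ->]; model_prep x y Hu;
    auto_derive; [model_side | model_field | model_side | model_field].
Qed.

Lemma Amod_nonzero x y : dot x y <> 0 -> Amod x y <> 0.
Proof.
  intros Hu. pose proof (sqn_pos_l _ _ Hu). unfold Amod.
  assert (0 < conf x) by apply exp_pos.
  apply Rmult_integral_contrapositive_currified; [|apply Rinv_neq_0_compat; lra].
  apply Rmult_integral_contrapositive_currified; apply pow_nonzero; lra.
Qed.

Lemma wedge_of_sarg_zero x y : dot x y <> 0 -> sarg x y = 0 -> wedge x y = 0.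
Proof.
  intros Hu Hs. pose proof (sqn_pos_l _ _ Hu). pose proof (sqn_pos_r _ _ Hu).
  assert (0 < sqrt (sqn x) * sqrt (sqn y)) by (apply Rmult_lt_0_compat; apply sqrt_lt_R0; lra).
  unfold sarg in Hs. apply Rmult_integral in Hs as [Hs | Hs].
  - apply Rmult_integral in Hs as [Hs | Hs]; [lra | exact Hs].
  - exfalso. revert Hs. apply Rinv_neq_0_compat. lra.
Qed.

Lemma sarg_y_parallel l x y : dot x y <> 0 -> wedge x y = 0 -> wedge_y l x <> 0 -> sarg_y l x y <> 0.
Proof.
  intros Hu Hw Hl. pose proof (sqn_pos_l _ _ Hu). pose proof (sqn_pos_r _ _ Hu).
  unfold sarg_y. rewrite Hw.
  replace (b * 0 * coord y l) with 0 by ring. unfold Rdiv. rewrite Rmult_0_l, Rminus_0_r.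
  repeat apply Rmult_integral_contrapositive_currified; try lra.
  apply Rinv_neq_0_compat. apply Rmult_integral_contrapositive_currified;
    apply Rgt_not_eq, sqrt_lt_R0; assumption.
Qed.

(* When jf has a kink cc |z| gg(z) at 0 (the case m = 1), second y-derivatives of E
   fail to exist on the line s = 0: there E_{y^j} = a + B |s| with B <> 0. *)
Section Kink.
Variables (gg : R -> R) (cc : R).
Hypothesis jf_kink : forall z, jf z = cc * Rabs z * gg z.
Hypothesis gg_smooth : forall z, -b < z < b -> ex_derive gg z.
Hypothesis cc_nonzero : cc <> 0.
Hypothesis gg0 : gg 0 <> 0.
Hypothesis Ph0 : Ph 0 <> 0.

Lemma Emod_y_not_derivable j l x y : (j = 1 \/ j = 2)%nat -> (l = 1 \/ l = 2)%nat ->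
  dot x y <> 0 -> wedge x y = 0 -> wedge_y j x <> 0 -> wedge_y l x <> 0 ->
  ~ ex_derive (fun t => Emod_y j x (upd y l t)) (coord y l).
Proof.
  intros Hj Hl Hu Hw Hwj Hwl.
  set (sg := fun t => sarg x (upd y l t)).
  set (a := fun t => Ph (sg t) * (Amod_y j x (upd y l t) * Ph (sg t))).
  set (B := fun t => Ph (sg t) * (2 * Amod x (upd y l t) * b * cc * gg (sg t) * sarg_y j x (upd y l t))).
  assert (Hsg0 : sg (coord y l) = 0).
  { unfold sg. rewrite upd_coord. unfold sarg. rewrite Hw. unfold Rdiv. ring. }
  assert (Hsmooth : ex_derive a (coord y l) /\ ex_derive B (coord y l)).
  { unfold a, B, sg. destruct Hj as [-> | ->], Hl as [-> | ->]; model_prep x y Hu;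
      split; auto_derive; model_side; apply gg_smooth; hyp. }
  destruct Hsmooth as [[da Ha] [dB HB]].
  intros Hex. apply (kink_not_derivable a B sg (coord y l) da dB (sarg_y l x y) Ha HB).
  - apply sarg_dy; assumption.
  - exact Hsg0.
  - apply sarg_y_parallel; assumption.
  - unfold B. rewrite Hsg0, upd_coord.
    pose proof (Amod_nonzero x y Hu). pose proof (sarg_y_parallel j x y Hu Hw Hwj).
    set (A := Amod x y) in *; set (sy := sarg_y j x y) in *; clearbody A sy.
    intros Hz. repeat (apply Rmult_integral in Hz; destruct Hz as [Hz|Hz]);
      first [contradiction | lra].
  - eapply ex_derive_ext; [|exact Hex]. intros t. cbv beta.
    unfold a, B, Emod_y. rewrite jf_kink. fold (sg t).
    match goal with |- ?u = ?v => change (@eq R u v) end. ring.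
Qed.
End Kink.

Lemma Emod_y_vanish j x y : (j = 1 \/ j = 2)%nat -> jf 0 = 0 ->
  coord x j = 0 -> coord y j = 0 -> Emod_y j x y = 0.
Proof.
  intros Hj H0 Hx Hy.
  assert (Hs : sarg x y = 0).
  { unfold sarg. replace (wedge x y) with 0; [unfold Rdiv; ring|].
    destruct x, y, Hj as [-> | ->]; simpl in *; unfold wedge; simpl; subst; ring. }
  unfold Emod_y, Amod_y. rewrite Hs, H0, Hx. ring.
Qed.
End Model.

(* beta/alpha is the reduced argument b (x^y) / (|x| |y|): the conformal factor cancels. *)
Lemma beta_div_alpha b m x y : 0 < sqn x -> 0 < sqn y -> beta b m x y / alpha m x y = sarg b x y.
Proof.
  intros Hx Hy.
  assert (Hsq : forall v : R2, fst v ^ 2 + snd v ^ 2 = sqn v) by (intros; unfold sqn; ring).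
  assert (0 < sqrt (sqn x)) by (apply sqrt_lt_R0; exact Hx).
  assert (0 < sqrt (sqn y)) by (apply sqrt_lt_R0; exact Hy).
  assert (0 < exp (Defs.sigma m x)) by apply exp_pos.
  unfold beta, alpha, sarg, wedge. rewrite !Hsq. field. repeat split; lra.
Qed.

Lemma sqn_pos_of_nonzero v : v <> (0, 0) -> 0 < sqn v.
Proof.
  destruct v as [v1 v2]. unfold sqn; simpl. intros Hv.
  destruct (Req_dec v1 0) as [-> | H1]; [destruct (Req_dec v2 0) as [-> | H2]|]; [easy | nra | nra].
Qed.

(* On the regular domain y is never orthogonal to x: otherwise |x^y| = |x| |y|
   and |beta/alpha| = b. *)
Lemma regular_dot b m x y : 0 < b -> regular_dom b m x y -> dot x y <> 0.
Proof.
  intros hb [Hx [Hy Hs]] Hu.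
  apply sqn_pos_of_nonzero in Hx. apply sqn_pos_of_nonzero in Hy.
  rewrite (beta_div_alpha b m x y Hx Hy) in Hs. unfold sarg in Hs.
  pose proof (lagrange_identity x y) as Hlag. rewrite Hu in Hlag.
  assert (Hw : Rabs (wedge x y) = sqrt (sqn x) * sqrt (sqn y)).
  { rewrite <- sqrt_mult by lra. rewrite Hlag, <- sqrt_Rsqr_abs. f_equal. unfold Rsqr. ring. }
  assert (0 < sqrt (sqn x) * sqrt (sqn y)) by (apply Rmult_lt_0_compat; apply sqrt_lt_R0; lra).
  unfold Rdiv in Hs. rewrite Rabs_mult, Rabs_mult, Rabs_inv, Hw, (Rabs_right b),
    (Rabs_right (_ * _)) in Hs by lra.
  rewrite Rmult_assoc, Rinv_r, Rmult_1_r in Hs by lra. lra.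
Qed.

(* On x.y <> 0, F^2 = e^(2 sigma) (x.y)^2 / |x|^2 * Phi(beta/alpha)^2: the square
   root in phi cancels against alpha by Lagrange's identity. *)
Lemma Fsq_model b c m x y : 0 < b -> dot x y <> 0 ->
  Fsq (Fmetric b c m) x y = Emod (Phi b c m) b (INR m) x y.
Proof.
  intros hb Hu.
  pose proof (sqn_pos_l _ _ Hu) as Hx. pose proof (sqn_pos_r _ _ Hu) as Hy.
  pose proof (sarg_bound b hb _ _ Hu) as Hs.
  assert (Hsq : forall v : R2, fst v ^ 2 + snd v ^ 2 = sqn v) by (intros; unfold sqn; ring).
  set (e := conf (INR m) x). assert (He : 0 < e) by apply exp_pos.
  set (rx := sqrt (sqn x)). set (ry := sqrt (sqn y)).
  assert (HR : rx ^ 2 = sqn x) by (unfold rx; rewrite <- Rsqr_pow2, Rsqr_sqrt; lra).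
  assert (HY : ry ^ 2 = sqn y) by (unfold ry; rewrite <- Rsqr_pow2, Rsqr_sqrt; lra).
  assert (rx <> 0) by (unfold rx; apply Rgt_not_eq, sqrt_lt_R0; auto).
  assert (ry <> 0) by (unfold ry; apply Rgt_not_eq, sqrt_lt_R0; auto).
  set (s := sarg b x y) in *.
  set (SQ := sqrt (b ^ 2 - s ^ 2)).
  assert (HSQ : SQ ^ 2 = b ^ 2 - s ^ 2) by (unfold SQ; rewrite <- Rsqr_pow2, Rsqr_sqrt; nra).
  pose proof (lagrange_identity x y) as Hlag.
  unfold Fsq, Fmetric. rewrite (beta_div_alpha b m x y Hx Hy).
  unfold alpha, phi, Emod, Amod, Phi. rewrite Hsq.
  change (fun t => c * Rabs t ^ (2 * m - 1) / Rpower (b ^ 2 - t ^ 2) (3 / 2)) with (dens b c m).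
  replace (exp (Defs.sigma m x)) with e by (unfold Defs.sigma; rewrite Hsq; reflexivity).
  fold ry. fold s SQ.
  set (I := Defs.RInt (dens b c m) 0 s).
  replace ((e * ry * (SQ / b + SQ * I)) ^ 2) with (e ^ 2 * ry ^ 2 * SQ ^ 2 * (1 + b * I) ^ 2 / b ^ 2)
    by (field; lra).
  rewrite HSQ. unfold s, sarg. fold rx ry.
  fold e. replace (dot x y ^ 2) with (sqn x * sqn y - wedge x y ^ 2) by lra.
  rewrite <- HR, <- HY. field. lra.
Qed.

Definition gdet (F : R2 -> R2 -> R) (x y : R2) : R :=
  gmet F 1 1 x y * gmet F 2 2 x y - gmet F 1 2 x y * gmet F 2 1 x y.

Lemma spray_of_hamel F x y P : gdet F x y <> 0 ->
  sprayTerm F 1 x y = 4 * P * (gmet F 1 1 x y * fst y + gmet F 1 2 x y * snd y) ->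
  sprayTerm F 2 x y = 4 * P * (gmet F 2 1 x y * fst y + gmet F 2 2 x y * snd y) ->
  spray F 1 x y = P * fst y /\ spray F 2 x y = P * snd y.
Proof.
  unfold gdet. intros Hdet H1 H2. unfold spray, ginv. cbv zeta. rewrite H1, H2.
  split; field; exact Hdet.
Qed.

(* Where det g = 0, the formula for g^{ij} divides by zero and the spray vanishes. *)
Lemma spray_degenerate F x y i : gdet F x y = 0 -> spray F i x y = 0.
Proof.
  unfold gdet. intros H. unfold spray, ginv. cbv zeta. rewrite H. unfold Rdiv. rewrite Rinv_0.
  destruct i as [|[|i]]; ring.
Qed.

Section Main.
Variables (b c : R) (m : nat).
Hypothesis hb : 0 < b.
Hypothesis hm : (1 <= m)%nat.

Let F := Fmetric b c m.
Let Ph := Phi b c m.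
Let jf := dens b c m.
Let hh := fun s => s * dens b c m s.
Let E := Emod Ph b (INR m).
Let Ex := Emod_x Ph jf b (INR m).
Let Ey := Emod_y Ph jf b (INR m).
Let DE := DEmod Ph hh b (INR m).

Lemma Ph_deriv z : -b < z < b -> is_derive Ph z (b * jf z).
Proof. exact (Phi_deriv b c m z hb). Qed.

Lemma hh_deriv z : -b < z < b -> is_derive hh z (jf z * (2 * INR m + 3 * z ^ 2 / (b ^ 2 - z ^ 2))).
Proof. exact (s_dens_deriv b c m z hm). Qed.

Lemma Fsq_agree : agree (Fsq F) E.
Proof. intros x y Hu. exact (Fsq_model b c m x y hb Hu). Qed.

Lemma Dx_Fsq k : (k = 1 \/ k = 2)%nat -> agree (Defs.Dx k (Fsq F)) (Ex k).
Proof.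
  intros Hk. apply (agree_Dx_deriv k _ E); [exact Fsq_agree|].
  intros x y Hu. exact (Emod_dx Ph jf b (INR m) hb Ph_deriv k x y Hk Hu).
Qed.

Lemma Dy_Fsq k : (k = 1 \/ k = 2)%nat -> agree (Dy k (Fsq F)) (Ey k).
Proof.
  intros Hk. apply (agree_Dy_deriv k _ E); [exact Fsq_agree|].
  intros x y Hu. exact (Emod_dy Ph jf b (INR m) hb Ph_deriv k x y Hk Hu).
Qed.

Lemma gmet_model i j : (j = 1 \/ j = 2)%nat -> agree (gmet F i j) (fun x y => / 2 * Dy i (Ey j) x y).
Proof.
  intros Hj x y Hu. unfold gmet. f_equal. exact (agree_Dy i _ _ (Dy_Fsq j Hj) x y Hu).
Qed.

Lemma sprayTerm_model l : (l = 1 \/ l = 2)%nat -> agree (sprayTerm F l)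
  (fun x y => Dy l (Ex 1%nat) x y * fst y + Dy l (Ex 2%nat) x y * snd y - Ex l x y).
Proof.
  intros Hl x y Hu. unfold sprayTerm.
  rewrite (agree_Dy l _ _ (Dx_Fsq 1 (or_introl eq_refl)) x y Hu),
    (agree_Dy l _ _ (Dx_Fsq 2 (or_intror eq_refl)) x y Hu), (Dx_Fsq l Hl x y Hu).
  reflexivity.
Qed.

Section Regular.
Variables (x y : R2).
Hypothesis Hu : dot x y <> 0.
Hypothesis Hjf : ex_derive jf (sarg b x y).

Lemma Ey_smooth j l : (j = 1 \/ j = 2)%nat -> (l = 1 \/ l = 2)%nat ->
  ex_derive (fun t => Ey j x (upd y l t)) (coord y l).
Proof. intros Hj Hl. exact (proj2 (Emod_partials_smooth Ph jf b (INR m) hb Ph_deriv j l x y Hj Hl Hu Hjf)). Qed.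

Lemma Ex_smooth k l : (k = 1 \/ k = 2)%nat -> (l = 1 \/ l = 2)%nat ->
  ex_derive (fun t => Ex k x (upd y l t)) (coord y l).
Proof. intros Hk Hl. exact (proj1 (Emod_partials_smooth Ph jf b (INR m) hb Ph_deriv k l x y Hk Hl Hu Hjf)). Qed.

(* Differentiating Euler's relation in y^l: the Hessian maps y to the gradient. *)
Lemma hessian_euler l : (l = 1 \/ l = 2)%nat ->
  fst y * Dy l (Ey 1%nat) x y + snd y * Dy l (Ey 2%nat) x y = Ey l x y.
Proof.
  intros Hl.
  assert (Hsum : Dy l (fun x y => fst y * Ey 1%nat x y + snd y * Ey 2%nat x y) x y = 2 * Ey l x y).
  { refine (agree_Dy_deriv l _ (fun x y => 2 * E x y) (fun x y => 2 * Ey l x y) _ _ x y Hu).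
    - intros x' y' Hu'. exact (Emod_euler Ph jf b (INR m) hb x' y' Hu').
    - intros x' y' Hu'. apply is_derive_scal.
      exact (Emod_dy Ph jf b (INR m) hb Ph_deriv l x' y' Hl Hu'). }
  rewrite (Dy_weighted_sum l Ey x y Hl) in Hsum by (apply Ey_smooth; auto).
  lra.
Qed.

(* Differentiating the transport term in y^l gives Hamel's relation for the spray. *)
Lemma sprayTerm_hamel l : (l = 1 \/ l = 2)%nat ->
  2 * E x y * sprayTerm F l x y = DE x y * Ey l x y.
Proof.
  intros Hl.
  destruct (Emod_hamel Ph jf hh b (INR m) hb Ph_deriv hh_deriv (fun _ => eq_refl) l x y Hl Hu)
    as [d [Hd Hid]].
  assert (Hsum : Dy l (fun x y => fst y * Ex 1%nat x y + snd y * Ex 2%nat x y) x y = d).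
  { rewrite (agree_Dy l _ DE); [apply deriv1_is, Hd | | exact Hu].
    intros x' y' Hu'. exact (Emod_transport Ph jf hh b (INR m) hb (fun _ => eq_refl) x' y' Hu'). }
  rewrite (Dy_weighted_sum l Ex x y Hl) in Hsum by (apply Ex_smooth; auto).
  rewrite (sprayTerm_model l Hl x y Hu).
  transitivity (2 * E x y * (d - 2 * Ex l x y)); [cbv beta; f_equal; lra | exact Hid].
Qed.

Lemma spray_regular : E x y <> 0 -> gdet F x y <> 0 ->
  spray F 1 x y = DE x y / (4 * E x y) * fst y /\ spray F 2 x y = DE x y / (4 * E x y) * snd y.
Proof.
  intros HE Hdet.
  assert (Hrow : forall l, (l = 1 \/ l = 2)%nat -> sprayTerm F l x y =
    4 * (DE x y / (4 * E x y)) * (gmet F l 1 x y * fst y + gmet F l 2 x y * snd y)).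
  { intros l Hl. rewrite !(gmet_model l) by (auto || exact Hu). cbv beta.
    apply (Rmult_eq_reg_l (2 * E x y)); [|lra].
    rewrite (sprayTerm_hamel l Hl), <- (hessian_euler l Hl). field. exact HE. }
  apply spray_of_hamel; [exact Hdet | apply Hrow; auto | apply Hrow; auto].
Qed.
End Regular.

Lemma gmet_not_derivable i j x y : (j = 1 \/ j = 2)%nat -> dot x y <> 0 ->
  ~ ex_derive (fun t => Ey j x (upd y i t)) (coord y i) -> gmet F i j x y = 0.
Proof.
  intros Hj Hu Hnd. rewrite (gmet_model i j Hj x y Hu).
  replace (Dy i (Ey j) x y) with 0; [ring|]. symmetry. apply deriv1_nex, Hnd.
Qed.

Lemma gmet_vanishing i j x y : (j = 1 \/ j = 2)%nat -> dot x y <> 0 ->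
  (forall t, Ey j x (upd y i t) = 0) -> gmet F i j x y = 0.
Proof.
  intros Hj Hu H0. rewrite (gmet_model i j Hj x y Hu).
  replace (Dy i (Ey j) x y) with 0; [ring|]. symmetry. apply deriv1_is.
  apply (is_derive_ext (fun _ => 0)); [intros t; symmetry; apply H0|].
  apply (is_derive_const (K := R_AbsRing) (0 : R)).
Qed.

Lemma gdet_Phi_zero x y : dot x y <> 0 -> ex_derive jf (sarg b x y) ->
  Ph (sarg b x y) = 0 -> gdet F x y = 0.
Proof.
  intros Hu Hjf H0.
  assert (Hg : forall i j, (i = 1 \/ i = 2)%nat -> (j = 1 \/ j = 2)%nat -> gmet F i j x y =
    / 2 * (2 * Amod (INR m) x y * b ^ 2 * jf (sarg b x y) ^ 2 * sarg_y b i x y * sarg_y b j x y)).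
  { intros i j Hi Hj. rewrite (gmet_model i j Hj x y Hu). f_equal. apply deriv1_is.
    exact (Emod_hessian_rank_one Ph jf b (INR m) hb Ph_deriv j i x y Hj Hi Hu Hjf H0). }
  unfold gdet. rewrite !Hg by auto. ring.
Qed.

(* For m = 1 and c <> 0, on the line beta = 0 the metric tensor is degenerate
   in the sense of [deriv1]: enough of its entries fail to exist or vanish. *)
Lemma gdet_kink x y : m = 1%nat -> c <> 0 -> dot x y <> 0 -> wedge x y = 0 -> gdet F x y = 0.
Proof.
  intros Hm1 Hc Hu Hw.
  assert (Hkink : forall z, jf z = c * Rabs z * weight b z)
    by (intros z; unfold jf; rewrite Hm1; apply dens_kink).
  assert (Hsmooth : forall z, -b < z < b -> ex_derive (weight b) z)
    by (intros z Hz; eexists; apply weight_deriv, Hz).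
  assert (Hw0 : weight b 0 <> 0) by (apply Rgt_not_eq, weight_pos).
  assert (HP0 : Ph 0 <> 0) by (unfold Ph; rewrite Phi_0 by exact hb; lra).
  assert (Hj0 : jf 0 = 0) by (rewrite Hkink, Rabs_R0; ring).
  pose proof (fun j l => Emod_y_not_derivable Ph jf b (INR m) hb Ph_deriv (weight b) c
                 Hkink Hsmooth Hc Hw0 HP0 j l x y) as Hnd.
  assert (Hg : forall i j, (i = 1 \/ i = 2)%nat -> (j = 1 \/ j = 2)%nat ->
      wedge_y j x <> 0 -> wedge_y i x <> 0 -> gmet F i j x y = 0).
  { intros i j Hi Hj Hwj Hwi. apply (gmet_not_derivable i j x y Hj Hu), Hnd; assumption. }
  assert (H1 : (1 = 1 \/ 1 = 2)%nat) by auto. assert (H2 : (2 = 1 \/ 2 = 2)%nat) by auto.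
  unfold gdet. destruct x as [x1 x2], y as [y1 y2].
  assert (Hu' : x1 * y1 + x2 * y2 <> 0) by exact Hu.
  assert (Hw' : x2 * y1 - x1 * y2 = 0) by exact Hw.
  destruct (Req_dec x1 0) as [Hx1 | Hx1]; [|destruct (Req_dec x2 0) as [Hx2 | Hx2]].
  - (* x = (0, x2): then y1 = 0, so E_{y^1} vanishes along the y^2-line *)
    assert (Hx2 : x2 <> 0) by (intros Hx2; apply Hu'; rewrite Hx1, Hx2; ring).
    assert (Hy1 : y1 = 0) by (apply (Rmult_eq_reg_l x2); [rewrite Hx1 in Hw'; lra | exact Hx2]).
    assert (Hvan : gmet F 2 1 (x1, x2) (y1, y2) = 0).
    { apply gmet_vanishing; [exact H1 | exact Hu | intros t; apply Emod_y_vanish; auto]. }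
    rewrite (Hg 1%nat 1%nat H1 H1 Hx2 Hx2), Hvan. ring.
  - (* x = (x1, 0): symmetric, with E_{y^2} vanishing along the y^1-line *)
    assert (Hy2 : y2 = 0) by (apply (Rmult_eq_reg_l x1); [rewrite Hx2 in Hw'; lra | exact Hx1]).
    assert (Hx1' : - x1 <> 0) by lra.
    assert (Hvan : gmet F 1 2 (x1, x2) (y1, y2) = 0).
    { apply gmet_vanishing; [exact H2 | exact Hu | intros t; apply Emod_y_vanish; auto]. }
    rewrite (Hg 2%nat 2%nat H2 H2 Hx1' Hx1'), Hvan. ring.
  - (* both coordinates nonzero: E_{y^1} and E_{y^2} both have a kink in y^1 *)
    assert (Hx1' : - x1 <> 0) by lra.
    rewrite (Hg 1%nat 1%nat H1 H1 Hx2 Hx2), (Hg 1%nat 2%nat H1 H2 Hx1' Hx2). ring.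
Qed.

Definition flat_factor (x y : R2) : R :=
  if Req_EM_T (gdet F x y) 0 then 0 else DE x y / (4 * E x y).

Theorem Fmetric_projectively_flat : projectively_flat_on F (regular_dom b m).
Proof.
  exists flat_factor. intros x y Hreg.
  pose proof (regular_dot b m x y hb Hreg) as Hu.
  unfold flat_factor. destruct (Req_EM_T (gdet F x y) 0) as [Hd | Hd].
  - rewrite !spray_degenerate by exact Hd. split; ring.
  - assert (Hjf : ex_derive jf (sarg b x y)).
    { apply dens_derivable; [exact hm | exact (sarg_bound b hb x y Hu) |].
      destruct (Compare_dec.le_lt_dec 2 m) as [H2 | H1]; [left; exact H2|].
      destruct (Req_dec c 0) as [Hc | Hc]; [right; left; exact Hc|].
      right; right. intros Hs. apply Hd, gdet_kink; [lia | exact Hc | exact Hu |].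
      exact (wedge_of_sarg_zero b hb x y Hu Hs). }
    assert (HE : E x y <> 0).
    { intros HE. apply Hd, (gdet_Phi_zero x y Hu Hjf).
      apply Rmult_integral in HE as [HA | HP]; [exfalso; exact (Amod_nonzero _ _ _ Hu HA)|].
      destruct (Req_dec (Ph (sarg b x y)) 0) as [H0 | H0]; [exact H0|].
      exfalso. exact (pow_nonzero _ 2 H0 HP). }
    exact (spray_regular x y Hu Hjf HE Hd).
Qed.
End Main.

Lemma beta2_dx1 b m : is_derive (fun t => beta b m (t, 0) (0, 1)) 1 (-2 * b * (INR m - 1)).
Proof.
  unfold beta, Defs.sigma. simpl. auto_derive.
  - replace (1 * (1 * 1) + 0 * (0 * 1)) with 1 by ring. rewrite sqrt_1. repeat split; lra.
  - replace (1 * (1 * 1) + 0 * (0 * 1)) with 1 by ring. rewrite sqrt_1, ln_1, Rmult_0_r, exp_0.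
    field.
Qed.

Lemma beta1_dx2 b m : is_derive (fun t => beta b m (1, t) (1, 0)) 0 b.
Proof.
  unfold beta, Defs.sigma. simpl. auto_derive.
  - replace (1 * (1 * 1) + 0 * (0 * 1)) with 1 by ring. rewrite sqrt_1. repeat split; lra.
  - replace (1 * (1 * 1) + 0 * (0 * 1)) with 1 by ring. rewrite sqrt_1, ln_1, Rmult_0_r, exp_0.
    field.
Qed.

Theorem beta_not_closed b m : 0 < b -> ~ closed_1form (beta b m) punctured.
Proof.
  intros hb Hclosed.
  assert (Hp : punctured (1, 0)) by (intros E; inversion E; lra).
  specialize (Hclosed (1, 0) Hp). unfold Defs.Dx in Hclosed. simpl in Hclosed.
  assert (E1 : deriv1 (fun t => beta b m (t, 0) (0, 1)) 1 = -2 * b * (INR m - 1))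
    by exact (deriv1_is _ _ _ (beta2_dx1 b m)).
  assert (E2 : deriv1 (fun t => beta b m (1, t) (1, 0)) 0 = b)
    by exact (deriv1_is _ _ _ (beta1_dx2 b m)).
  rewrite E1, E2 in Hclosed.
  destruct m as [|m]; [simpl in Hclosed; lra|].
  pose proof (pos_INR m). rewrite S_INR in Hclosed. nra.
Qed.

Theorem mainTheorem13 (b c : R) (m : nat) (hb : 0 < b) (hm : (1 <= m)%nat) :
  projectively_flat_on (Fmetric b c m) (regular_dom b m)
  /\ ~ closed_1form (beta b m) punctured.
Proof.
  split.
  - exact (Fmetric_projectively_flat b c m hb hm).
  - exact (beta_not_closed b m hb).
Qed.
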